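(* Let $i,j,k$ be integers with $j>0$ and $0\le k<i$, and suppose the virtual diagram $(i,j,k)$ has one component. Let $GD((i,j,k))$ be its Gauss diagram. Then $i(c)\neq 0$ for every chord $c$ of $GD((i,j,k))$.
   Context: Braid conventions: braids on $i$ strands are drawn horizontally, oriented left to right, with positions $1,\dots,i$ numbered from top to bottom, and words are read left to right. The generator $\sigma_m$ is a classical (positive) crossing at which the strand in position $m$ moves to position $m+1$, passing over the strand moving from position $m+1$ to position $m$. Virtual crossings carry no over/under information. $VB^1_{i,j}$ is obtained from $(\sigma_1\cdots\sigma_{i-1})^j$ by replacing the crossings of the first (left-most) block $\sigma_1\cdots\sigma_{i-1}$ by virtual crossings. $B_k=\sigma_k\cdots\sigma_1$, with $B_0$ trivial. $(i,j,k)$ is the closure of $VB^1_{i,j}B_k$. Gauss diagram: for an oriented virtual knot diagram, take a circle $\Gamma$ parametrizing the knot. Each classical crossing gives a chord joining its two preimages, with an arrowhead at the under-passage and labelled by the crossing sign; virtual crossings are ignored. A crossing is positive ($+1$) if the understrand passes from the right to the left of the overstrand, and negative ($-1$) otherwise. For a chord $c$, its endpoints split $\Gamma$ into open arcs $\gamma_1,\gamma_2$. Flip every chord $c'\neq c$ with one endpoint on each arc whose arrowhead lies on $\gamma_2$; flipping reverses the arrow and negates the sign. Then $i(c)$ is the sum of signs of all chords with one endpoint on each of $\gamma_1,\gamma_2$. This is well defined up to sign. *)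

From mathcomp Require Import all_boot all_order all_algebra.
Set Implicit Arguments. Unset Strict Implicit. Unset Printing Implicit Defensive.
Import GRing.Theory Num.Theory.

(* A braid word is a sequence of letters (m, b): the crossing between
   positions m and m+1 (positions 1..i, top to bottom); b = true for the
   classical generator sigma_m, b = false for a virtual crossing. *)
Definition letter := (nat * bool)%type.

Definition block (i : nat) (b : bool) : seq letter :=
  [seq (m, b) | m <- iota 1 i.-1].

Definition VB1 (i j : nat) : seq letter :=
  block i false ++ flatten (nseq j.-1 (block i true)).

Definition Bk (k : nat) : seq letter := [seq (m, true) | m <- rev (iota 1 k)].

Definition ijk_word (i j k : nat) : seq letter := VB1 i j ++ Bk k.

Definition step (m p : nat) : nat :=
  if p == m then m.+1 else if p == m.+1 then m else p.

Definition braid_perm (w : seq letter) (p : nat) : nat :=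
  foldl (fun q l => step l.1 q) p w.

(* the closure of the braid on i strands has exactly one component:
   the closure permutation is a single cycle on {1..i} *)
Definition one_component (i : nat) (w : seq letter) : Prop :=
  forall p, 1 <= p <= i -> exists n, iter n (braid_perm w) 1 = p.

(* Passing once through the braid from position p, list the classical
   crossings met, as (index of the letter in w, under?).  At sigma_m the
   strand at position m goes over, the one at position m+1 goes under. *)
Fixpoint pass_events (w : seq letter) (t p : nat) : seq (nat * bool) :=
  match w with
  | [::] => [::]
  | (m, b) :: w' =>
      (if b && ((p == m) || (p == m.+1)) then [:: (t, p == m.+1)] else [::])
      ++ pass_events w' t.+1 (step m p)
  end.

(* Gauss word of the closure (assumed one component), traversed starting at
   the left end of position 1: i passes through the braid.  The entries are
   the endpoints on the circle Gamma, in cyclic order; endpoint (t, true) is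
   the under-passage (arrowhead) of the chord of crossing t, (t, false) is
   its over-passage. *)
Definition gauss_word (i : nat) (w : seq letter) : seq (nat * bool) :=
  flatten [seq pass_events w 0 (iter n (braid_perm w) 1) | n <- iota 0 i].

Definition is_chord (w : seq letter) (t : nat) : bool :=
  (t < size w) && (nth (0, false) w t).2.

(* every sigma_m is a positive crossing *)
Definition chord_sign (w : seq letter) (t : nat) : int := 1.

Definition over_pos (G : seq (nat * bool)) (t : nat) : nat := index (t, false) G.
Definition under_pos (G : seq (nat * bool)) (t : nat) : nat := index (t, true) G.

(* index i(c): gamma_1 = open arc of positions strictly between the two
   endpoints of c, gamma_2 = the complementary open arc.  A chord c' <> c
   with one endpoint on each arc contributes its sign if its arrowhead lies
   on gamma_1, and minus its sign (it is flipped) if its arrowhead lies on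
   gamma_2. *)
Definition chord_index (i : nat) (w : seq letter) (c : nat) : int :=
  let G := gauss_word i w in
  let lo := minn (over_pos G c) (under_pos G c) in
  let hi := maxn (over_pos G c) (under_pos G c) in
  let in1 q := (lo < q < hi) in
  \sum_(t <- iota 0 (size w) | is_chord w t && (t != c)
         && (in1 (over_pos G t) != in1 (under_pos G t)))
     (if in1 (under_pos G t) then chord_sign w t else - chord_sign w t).

From mathcomp Require Import all_boot all_order all_algebra.
From mathcomp Require Import zify.
Set Implicit Arguments. Unset Strict Implicit. Unset Printing Implicit Defensive.
Import GRing.Theory Num.Theory.

(* Read the closure as i passes through the braid, pass n starting at position
   P^n(1), P the closure permutation; one component means these starts are
   1, ..., i in some order.  A classical crossing c is met in two passes
   n1 < n2, and i(c) counts arrowheads minus arrow tails on the arc between the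
   two visits.  Passing over sigma_m moves a strand down one position and passing
   under it moves it up one, so that count is minus the displacement of the arc
   through classical crossings.  The arc leaves c at the position where it comes
   back to c, and in between it crosses the virtual block n2 - n1 times, never
   from position 1 (only pass 0 starts there), each time moving up one position.
   Hence i(c) = -(n2 - n1) < 0. *)

Arguments braid_perm : simpl never.

Lemma stepK m : involutive (step m).
Proof. by move=> p; rewrite /step; do ! case: eqP => //=; lia. Qed.

Lemma braid_perm_cons l w p : braid_perm (l :: w) p = braid_perm w (step l.1 p).
Proof. by []. Qed.

Lemma braid_perm_cat u v p : braid_perm (u ++ v) p = braid_perm v (braid_perm u p).
Proof. exact: foldl_cat. Qed.

Lemma braid_perm_rcons w l p : braid_perm (rcons w l) p = step l.1 (braid_perm w p).
Proof. exact: foldl_rcons. Qed.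

Lemma braid_permK w : cancel (braid_perm w) (braid_perm (rev w)).
Proof.
elim: w => [|l w IHw] p //.
by rewrite rev_cons braid_perm_rcons braid_perm_cons IHw stepK.
Qed.

Lemma braid_permKV w : cancel (braid_perm (rev w)) (braid_perm w).
Proof. by move=> p; rewrite -{1}(revK w) braid_permK. Qed.

Lemma braid_perm_inj w : injective (braid_perm w).
Proof. exact: can_inj (braid_permK w). Qed.

Definition inrange (i : nat) (l : letter) : bool := (0 < l.1 < i).

Lemma braid_perm_range i w p :
  all (inrange i) w -> 0 < p <= i -> 0 < braid_perm w p <= i.
Proof.
elim: w p => [|[m b] w IHw] p //= /andP [m_range w_range] p_range.
rewrite braid_perm_cons IHw //; move: m_range.
by rewrite /inrange /step /=; do ! case: eqP => //=; lia.
Qed.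

Lemma block_range i b : all (inrange i) (block i b).
Proof. by apply/allP => l /mapP [m]; rewrite mem_iota /inrange => m_range -> /=; lia. Qed.

Lemma braid_perm_iota_lt a n b p :
  p < a -> braid_perm [seq (m, b) | m <- iota a n] p = p.
Proof.
elim: n a => [|n IHn] a p_lt //=.
rewrite braid_perm_cons /step.
have [/negbTE -> /negbTE ->] : p != a /\ p != a.+1 by split; apply/eqP; lia.
by rewrite IHn //; lia.
Qed.

Lemma braid_perm_iota a n b p :
  a < p <= a + n -> braid_perm [seq (m, b) | m <- iota a n] p = p.-1.
Proof.
elim: n a => [|n IHn] a p_range /=; first by lia.
rewrite braid_perm_cons /step (_ : (p == a) = false); last by lia.
case: eqP => /= [->|p_neq]; first by rewrite braid_perm_iota_lt.
by rewrite IHn //; lia.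
Qed.

Section SingleCycle.

Variables (f : nat -> nat) (i : nat).
Hypothesis i_gt0 : 0 < i.
Hypothesis f_range : forall p, 0 < p <= i -> 0 < f p <= i.
Hypothesis f_cycle : forall p, 0 < p <= i -> exists n, iter n f 1 = p.

Lemma iter_range n : 0 < iter n f 1 <= i.
Proof. by elim: n => [|n IHn] /=; [lia | exact: f_range]. Qed.

Lemma traject_cycle_uniq : uniq (traject f 1 i).
Proof.
case: i i_gt0 f_cycle => // n _ cycle; rewrite looping_uniq.
apply/negP => /loopingP looped.
have sub : {subset iota 1 n.+1 <= traject f 1 n}.
  by move=> p; rewrite mem_iota => p_range; have [k <-] := cycle p p_range.
by have := uniq_leq_size (iota_uniq 1 n.+1) sub; rewrite size_iota size_traject ltnn.
Qed.

Lemma orbit_inj : {in gtn i &, injective (fun n => iter n f 1)}.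
Proof.
move=> a b a_lt b_lt /= eq_ab; apply/eqP.
rewrite -(nth_uniq 1 _ _ traject_cycle_uniq) ?size_traject //.
by rewrite !nth_traject // eq_ab.
Qed.

Lemma orbit_cover p : 0 < p <= i -> exists2 n, n < i & iter n f 1 = p.
Proof.
move=> p_range.
have sub : {subset traject f 1 i <= iota 1 i}.
  by move=> x /trajectP [n _ ->]; rewrite mem_iota add1n ltnS iter_range.
have [|_ eq_traject] := uniq_min_size traject_cycle_uniq sub.
  by rewrite size_iota size_traject.
have /trajectP [n n_lt ->] : p \in traject f 1 i by rewrite eq_traject mem_iota; lia.
by exists n.
Qed.

End SingleCycle.

Definition crossing_event (t : nat) (l : letter) (p : nat) : seq (nat * bool) :=
  if l.2 && ((p == l.1) || (p == l.1.+1)) then [:: (t, p == l.1.+1)] else [::].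

(* The position from which a strand enters sigma_m to pass under it (b = true)
   or over it (b = false). *)
Definition incoming (m : nat) (b : bool) : nat := if b then m.+1 else m.

Lemma crossing_event_incoming t m b :
  crossing_event t (m, true) (incoming m b) = [:: (t, b)].
Proof. by case: b; rewrite /crossing_event /incoming /= eqxx ?orbT //; case: eqP => //; lia. Qed.

Lemma step_incoming m b : step m (incoming m b) = incoming m (~~ b).
Proof. by case: b; rewrite /step /incoming /= eqxx //; case: eqP => //; lia. Qed.

Lemma mem_crossing_event t l p x :
  x \in crossing_event t l p -> [/\ x.1 = t, l.2 & p = incoming l.1 x.2].
Proof.
rewrite /crossing_event; case: ifP => // /andP [-> p_at]; rewrite inE => /eqP -> /=.
by split=> //; case/orP: p_at => /eqP ->; rewrite /incoming ?eqxx //; case: eqP => //; lia.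
Qed.

Lemma pass_events_cons l w t p :
  pass_events (l :: w) t p = crossing_event t l p ++ pass_events w t.+1 (step l.1 p).
Proof. by case: l. Qed.

Lemma pass_events_cat u v t p :
  pass_events (u ++ v) t p =
  pass_events u t p ++ pass_events v (t + size u) (braid_perm u p).
Proof.
elim: u t p => [|l u IHu] t p; first by rewrite addn0.
by rewrite cat_cons !pass_events_cons IHu catA addSnnS.
Qed.

Lemma pass_events_time w t p x : x \in pass_events w t p -> t <= x.1 < t + size w.
Proof.
elim: w t p => [|l w IHw] t p //.
rewrite pass_events_cons mem_cat => /orP [/mem_crossing_event [-> _ _]|/IHw] /=; lia.
Qed.

Lemma pass_events_uniq w t p : uniq (pass_events w t p).
Proof.
elim: w t p => [|l w IHw] t p //.
rewrite pass_events_cons cat_uniq IHw andbT; apply/andP; split.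
  by rewrite /crossing_event; case: ifP.
apply/hasPn => x /pass_events_time x_late.
by apply/negP => /mem_crossing_event [x_t _ _]; lia.
Qed.

Definition pass_head (w : seq letter) (c p : nat) : seq (nat * bool) :=
  pass_events (take c w) 0 p.

Definition pass_tail (w : seq letter) (c p : nat) : seq (nat * bool) :=
  pass_events (drop c.+1 w) c.+1 (braid_perm (take c.+1 w) p).

Lemma pass_events_split w c p : c < size w ->
  pass_events w 0 p = pass_head w c p ++
    crossing_event c (nth (0, false) w c) (braid_perm (take c w) p) ++ pass_tail w c p.
Proof.
move=> c_lt; rewrite /pass_head /pass_tail (take_nth (0, false) c_lt) braid_perm_rcons.
rewrite -{1}(cat_take_drop c w) pass_events_cat (drop_nth (0, false) c_lt).
by rewrite pass_events_cons size_take c_lt.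
Qed.

Lemma mem_pass_events w p t b : (t, b) \in pass_events w 0 p ->
  is_chord w t /\ braid_perm (take t w) p = incoming (nth (0, false) w t).1 b.
Proof.
move=> tb_in; have /= t_lt := pass_events_time tb_in.
move: tb_in; rewrite (pass_events_split p t_lt) !mem_cat.
case/or3P=> [/pass_events_time|/mem_crossing_event [_ l2 <-]|/pass_events_time] /=.
- by rewrite size_take t_lt; lia.
- by rewrite /is_chord t_lt l2.
- lia.
Qed.

Definition pass_start (w : seq letter) (n : nat) : nat := iter n (braid_perm w) 1.

Lemma pass_startS w n : pass_start w n.+1 = braid_perm w (pass_start w n).
Proof. by []. Qed.

Definition passes (w : seq letter) (a L : nat) : seq (nat * bool) :=
  flatten [seq pass_events w 0 (pass_start w n) | n <- iota a L].

Lemma passesD w a L1 L2 : passes w a (L1 + L2) = passes w a L1 ++ passes w (a + L1) L2.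
Proof. by rewrite /passes iotaD map_cat flatten_cat. Qed.

Lemma passesS w a L :
  passes w a L.+1 = pass_events w 0 (pass_start w a) ++ passes w a.+1 L.
Proof. by []. Qed.

Lemma gauss_word_passes i w : gauss_word i w = passes w 0 i.
Proof. by []. Qed.

Lemma gauss_word_chord i w x : x \in gauss_word i w -> is_chord w x.1.
Proof. by case: x => t b /flattenP [_ /mapP [n _ ->] /mem_pass_events []]. Qed.

Lemma uniq_flatten_map (I T : eqType) (F : I -> seq T) (s : seq I) :
  uniq s -> {in s, forall n, uniq (F n)} ->
  {in s &, forall n n' x, x \in F n -> x \in F n' -> n = n'} ->
  uniq (flatten [seq F n | n <- s]).
Proof.
elim: s => [|n s IHs] //= /andP [n_notin s_uniq] F_uniq F_disj.
rewrite cat_uniq F_uniq ?mem_head // IHs //; first last.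
- by move=> n1 n2 n1_in n2_in; apply: F_disj; rewrite inE ?n1_in ?n2_in orbT.
- by move=> n' n'_in; rewrite F_uniq // inE n'_in orbT.
rewrite andbT; apply/hasPn => x /flattenP [_ /mapP [n' n'_in ->] x_in'].
apply/negP => x_in; have n'_in_ns : n' \in n :: s by rewrite inE n'_in orbT.
by move: n_notin; rewrite (F_disj n n' (mem_head n s) n'_in_ns x x_in x_in') n'_in.
Qed.

Lemma gauss_word_uniq i w :
  {in gtn i &, injective (pass_start w)} -> uniq (gauss_word i w).
Proof.
move=> start_inj.
apply: uniq_flatten_map => [|n _|n n']; rewrite ?iota_uniq ?pass_events_uniq //.
rewrite !mem_iota /= => n_lt n'_lt [t b] /mem_pass_events [_ at_n] /mem_pass_events [_ at_n'].
apply: start_inj; rewrite ?inE //.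
by apply: (@braid_perm_inj (take t w)); rewrite at_n at_n'.
Qed.

(* The open arc of Gamma from the endpoint of chord c met in pass n1 to the
   one met in pass n2. *)
Definition arc (w : seq letter) (c n1 n2 : nat) : seq (nat * bool) :=
  pass_tail w c (pass_start w n1) ++ passes w n1.+1 (n2 - n1.+1) ++
  pass_head w c (pass_start w n2).

Lemma gauss_word_split i w c n1 n2 : n1 < n2 < i -> c < size w ->
  let event n := crossing_event c (nth (0, false) w c)
                   (braid_perm (take c w) (pass_start w n)) in
  exists A B, gauss_word i w = A ++ event n1 ++ arc w c n1 n2 ++ event n2 ++ B.
Proof.
move=> n_order c_lt event.
have -> : i = n1 + ((n2 - n1.+1).+1 + (i - n2.+1).+1) by lia.
rewrite gauss_word_passes passesD add0n passesD passesS.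
have -> : n1 + (n2 - n1.+1).+1 = n2 by lia.
rewrite passesS !(pass_events_split _ c_lt).
exists (passes w 0 n1 ++ pass_head w c (pass_start w n1)).
exists (pass_tail w c (pass_start w n2) ++ passes w n2.+1 (i - n2.+1)).
by rewrite /arc -!catA.
Qed.

Definition under_balance (s : seq (nat * bool)) : int :=
  (\sum_(x <- s) if x.2 then 1 else -1)%R.

Lemma under_balance_cat s1 s2 :
  under_balance (s1 ++ s2) = (under_balance s1 + under_balance s2)%R.
Proof. exact: big_cat. Qed.

Lemma index_cat_cons (T : eqType) (s1 s2 : seq T) x :
  x \notin s1 -> index x (s1 ++ x :: s2) = size s1.
Proof. by move=> x_notin; rewrite index_cat (negbTE x_notin) /= eqxx addn0. Qed.

Lemma index_mid (T : eqType) (A S C : seq T) x : uniq (A ++ S ++ C) ->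
  (size A <= index x (A ++ S ++ C) < size A + size S) = (x \in S).
Proof.
rewrite cat_uniq => /and3P [_ /hasPn A_disj _].
rewrite index_cat; case: ifPn => [x_inA|x_notinA].
  have x_notinS : x \notin S.
    by apply: contraL x_inA => x_inS; apply: A_disj; rewrite mem_cat x_inS.
  by rewrite (negbTE x_notinS); have := index_mem x A; rewrite x_inA; lia.
by rewrite index_cat; case: ifPn => [x_inS|_]; have := index_mem x S; lia.
Qed.

(* A chord with both endpoints in S contributes +1 and -1 to [under_balance S]. *)
Lemma sum_chords_across_arc (N c : nat) (ch : pred nat) (S : seq (nat * bool)) :
  uniq S -> (forall x, x \in S -> ch x.1 && (x.1 < N)) -> (forall b, (c, b) \notin S) ->
  (\sum_(t <- iota 0 N | ch t && (t != c) && (((t, false) \in S) != ((t, true) \in S)))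
     if (t, true) \in S then 1 else - 1)%R = under_balance S.
Proof.
move=> S_uniq S_chords c_notin.
pose P := [seq (t, b) | t <- iota 0 N, b <- [:: true; false]].
have S_perm : perm_eq S [seq x <- P | x \in S].
  apply: uniq_perm => // [|x].
    by rewrite filter_uniq // allpairs_uniq ?iota_uniq // => -[? ?] [? ?] _ _ [-> ->].
  rewrite mem_filter; apply/idP/andP => [x_in|[] //]; split=> //.
  apply/allpairsP; exists x; case: x x_in => t b /S_chords /= /andP [_ t_lt].
  by split=> //; [rewrite mem_iota | case: b].
have -> : under_balance S = (\sum_(x <- P) if x \in S then if x.2 then 1 else -1 else 0)%R.
  by rewrite /under_balance (perm_big _ S_perm) big_filter big_mkcond.
rewrite big_mkcond big_allpairs.
apply: eq_bigr => t _; rewrite !big_cons big_nil /= addr0.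
case: (eqVneq t c) => [->|t_neq_c]; first by rewrite !(negbTE (c_notin _)) !andbF addr0.
case ch_t: (ch t) => /=.
  by case: ((t, true) \in S); case: ((t, false) \in S).
have notin b : (t, b) \in S = false by apply/negP => /S_chords; rewrite ch_t.
by rewrite !notin addr0.
Qed.

Lemma chord_index_arc i w c b A S B :
  uniq (gauss_word i w) -> gauss_word i w = A ++ (c, b) :: S ++ (c, ~~ b) :: B ->
  chord_index i w c = under_balance S.
Proof.
move=> G_uniq G_eq; rewrite /chord_index /over_pos /under_pos G_eq.
rewrite G_eq in G_uniq; set G := A ++ _ in G_uniq *.
have AS_uniq := G_uniq; rewrite /G -cat_cons catA cat_uniq in AS_uniq.
case/and3P: AS_uniq => /[dup] AS_uniq; rewrite cat_uniq cons_uniq.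
case/and3P=> [_ /hasPn A_disj /andP [b_notinS S_uniq]] /hasPn AS_disj _.
have nb_notin : (c, ~~ b) \notin A ++ (c, b) :: S by apply: AS_disj; apply: mem_head.
have b_notinA : (c, b) \notin A by apply: A_disj; apply: mem_head.
have c_notinS b' : (c, b') \notin S.
  case: (eqVneq b' b) => [-> //|b'_neq].
  have -> : b' = ~~ b by move: b'_neq; case: (b); case: (b').
  by apply: contra nb_notin; rewrite mem_cat inE => ->; rewrite !orbT.
have idx_b : index (c, b) G = size A by apply: index_cat_cons.
have idx_nb : index (c, ~~ b) G = (size A + size S).+1.
  by rewrite /G -cat_cons catA index_cat_cons // size_cat /= addnS.
have [-> ->] : minn (index (c, false) G) (index (c, true) G) = size A /\
               maxn (index (c, false) G) (index (c, true) G) = (size A + size S).+1.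
  by case: (b) idx_b idx_nb => /= -> ->; lia.
have in_arc x : (size A < index x G < (size A + size S).+1) = (x \in S).
  by rewrite -(index_mid x (A := rcons A (c, b)) (C := (c, ~~ b) :: B))
             /G cat_rcons // size_rcons.
under eq_bigl => t do rewrite !in_arc.
under eq_bigr => t _ do rewrite in_arc.
apply: sum_chords_across_arc => // x x_in.
have /andP [x_lt x_chord] : is_chord w x.1.
  by apply: (@gauss_word_chord i); rewrite G_eq !(mem_cat, inE) x_in !orbT.
by rewrite /is_chord x_lt x_chord.
Qed.

Fixpoint virtual_drift (w : seq letter) (p : nat) : int :=
  match w with
  | [::] => 0
  | (m, b) :: w' =>
      (if b then 0 else (step m p)%:Z - p%:Z) + virtual_drift w' (step m p)
  end%R.

Lemma virtual_drift_cat u v p :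
  virtual_drift (u ++ v) p = (virtual_drift u p + virtual_drift v (braid_perm u p))%R.
Proof. by elim: u p => [|[m b] u IHu] p /=; rewrite ?add0r // IHu addrA. Qed.

Lemma virtual_drift_classical w p : all (fun l => l.2) w -> virtual_drift w p = 0%R.
Proof. by elim: w p => [|[m b] w IHw] p //= /andP [/= -> /IHw ->]; rewrite addr0. Qed.

Lemma virtual_drift_virtual w p :
  all (fun l => ~~ l.2) w -> virtual_drift w p = ((braid_perm w p)%:Z - p%:Z)%R.
Proof.
elim: w p => [|[m b] w IHw] p /=; first by rewrite subrr.
by case/andP=> /negPf -> /IHw ->; rewrite braid_perm_cons addrC addrA subrK.
Qed.

Lemma under_balance_crossing_event t l p : under_balance (crossing_event t l p) =
  if l.2 then (p%:Z - (step l.1 p)%:Z)%R else 0%R.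
Proof.
rewrite /crossing_event /under_balance /step; case: l => m [] /=; last by rewrite big_nil.
have [->|p_neq] := eqVneq p m; first by rewrite ltn_eqF // big_seq1 /=; lia.
have [->|p_neq1] := eqVneq p m.+1; first by rewrite big_seq1 /=; lia.
by rewrite big_nil subrr.
Qed.

Lemma under_balance_pass_events w t p : under_balance (pass_events w t p) =
  (p%:Z - (braid_perm w p)%:Z + virtual_drift w p)%R.
Proof.
elim: w t p => [|[m b] w IHw] t p; first by rewrite /under_balance big_nil subrr.
rewrite pass_events_cons under_balance_cat IHw under_balance_crossing_event /=.
by rewrite braid_perm_cons; case: b => /=; lia.
Qed.

Lemma under_balance_passes w a L :
  (forall n, a <= n < a + L -> virtual_drift w (pass_start w n) = (-1)%R) ->
  under_balance (passes w a L) =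
  ((pass_start w a)%:Z - (pass_start w (a + L))%:Z - L%:Z)%R.
Proof.
elim: L a => [|L IHL] a drift_n; first by rewrite addn0 /under_balance big_nil; lia.
rewrite passesS under_balance_cat under_balance_pass_events IHL => [|n n_range]; last first.
  by apply: drift_n; lia.
by rewrite drift_n -?pass_startS ?addSnnS; lia.
Qed.

Section VirtualFirstBlock.

Variables (i : nat) (R : seq letter).
Hypothesis i_gt0 : 0 < i.
Hypothesis R_classical : all (fun l => l.2) R.
Hypothesis R_range : all (inrange i) R.

Let w := block i false ++ R.

Hypothesis w_cycle : one_component i w.

Lemma block_word_range : all (inrange i) w.
Proof. by rewrite all_cat block_range. Qed.

Let braid_perm_w_range p : 0 < p <= i -> 0 < braid_perm w p <= i.
Proof. exact: braid_perm_range block_word_range. Qed.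

Lemma pass_start_range n : 0 < pass_start w n <= i.
Proof. exact: iter_range i_gt0 braid_perm_w_range n. Qed.

Lemma pass_start_inj : {in gtn i &, injective (pass_start w)}.
Proof. exact: orbit_inj i_gt0 w_cycle. Qed.

Lemma pass_start_cover p : 0 < p <= i -> exists2 n, n < i & pass_start w n = p.
Proof. exact: orbit_cover i_gt0 braid_perm_w_range w_cycle p. Qed.

Lemma pass_start_gt1 n : 0 < n < i -> 1 < pass_start w n.
Proof.
move=> n_range; have := pass_start_range n.
have [start1|] := eqVneq (pass_start w n) 1; last lia.
suff: n = 0 by lia.
by apply: pass_start_inj; rewrite ?inE /= ?start1 //; lia.
Qed.

Lemma virtual_drift_gt1 p : 1 < p <= i -> virtual_drift w p = (-1)%R.
Proof.
move=> p_range; rewrite virtual_drift_cat (virtual_drift_classical _ R_classical) addr0.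
rewrite virtual_drift_virtual; last by rewrite /block all_map; apply/allP.
by rewrite /block braid_perm_iota; lia.
Qed.

Lemma drop_block_word_classical c : i.-1 <= c -> all (fun l => l.2) (drop c w).
Proof.
move=> c_ge; rewrite drop_cat /block size_map size_iota ltnNge c_ge /=.
by apply/allP => l /mem_drop; apply/allP.
Qed.

Lemma virtual_drift_take c p : i.-1 <= c -> virtual_drift (take c w) p = virtual_drift w p.
Proof.
move=> c_ge; rewrite -[in RHS](cat_take_drop c w) virtual_drift_cat.
by rewrite (virtual_drift_classical _ (drop_block_word_classical c_ge)) addr0.
Qed.

Lemma chord_after_block c : is_chord w c -> i.-1 <= c.
Proof.
case/andP=> _; rewrite leqNgt; apply: contraL => c_lt.
by rewrite nth_cat /block size_map size_iota c_lt (nth_map 0) ?size_iota.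
Qed.

Lemma arc_under_balance c n1 n2 : i.-1 <= c < size w -> n1 < n2 < i ->
  braid_perm (take c.+1 w) (pass_start w n1) = braid_perm (take c w) (pass_start w n2) ->
  under_balance (arc w c n1 n2) = (- (n2 - n1)%:Z)%R.
Proof.
move=> /andP [c_ge c_lt] n_order meet.
have tail_end p : braid_perm (drop c.+1 w) (braid_perm (take c.+1 w) p) = braid_perm w p.
  by rewrite -braid_perm_cat cat_take_drop.
have tail_drift p : virtual_drift (drop c.+1 w) p = 0%R.
  by apply: virtual_drift_classical; apply: drop_block_word_classical; apply: leqW.
have mid_drift n : n1.+1 <= n < n1.+1 + (n2 - n1.+1) ->
    virtual_drift w (pass_start w n) = (-1)%R.
  move=> n_range; apply: virtual_drift_gt1.
  by have := pass_start_range n; have := @pass_start_gt1 n; lia.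
rewrite /arc !under_balance_cat /pass_tail /pass_head !under_balance_pass_events.
rewrite tail_end tail_drift (under_balance_passes mid_drift) virtual_drift_take //.
rewrite virtual_drift_gt1; last by have := pass_start_range n2; have := @pass_start_gt1 n2; lia.
by rewrite meet -pass_startS (_ : n1.+1 + (n2 - n1.+1) = n2); lia.
Qed.

Lemma crossing_passes c : is_chord w c ->
  let m := (nth (0, false) w c).1 in
  exists n1 n2 b, [/\ n1 < n2 < i,
    braid_perm (take c w) (pass_start w n1) = incoming m b &
    braid_perm (take c w) (pass_start w n2) = incoming m (~~ b)].
Proof.
move=> /[dup] /andP [c_lt _] /chord_after_block c_ge m.
have m_range : 0 < m < i by apply: (allP block_word_range); apply: mem_nth.
have meets b : exists2 n, n < i & braid_perm (take c w) (pass_start w n) = incoming m b.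
  have take_range : all (inrange i) (rev (take c w)).
    by rewrite all_rev; apply/allP => l /mem_take; apply: (allP block_word_range).
  have incoming_range : 0 < incoming m b <= i by rewrite /incoming; case: b; lia.
  have [n n_lt start_n] := pass_start_cover (braid_perm_range take_range incoming_range).
  by exists n; rewrite // start_n braid_permKV.
have [[n_u nu_lt at_u] [n_o no_lt at_o]] := (meets true, meets false).
case: (ltngtP n_u n_o) => [lt_uo|lt_ou|eq_uo].
- by exists n_u, n_o, true; split; rewrite ?lt_uo.
- by exists n_o, n_u, false; split; rewrite ?lt_ou.
- by move: at_u; rewrite eq_uo at_o /incoming; lia.
Qed.

Lemma chord_index_lt0 c : is_chord w c -> (chord_index i w c < 0)%R.
Proof.
move=> /[dup] c_chord /andP [c_lt l2]; have c_ge := chord_after_block c_chord.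
have [n1 [n2 [b [n_order at_n1 at_n2]]]] := crossing_passes c_chord.
have [A [B]] := gauss_word_split n_order c_lt.
case l_eq: (nth (0, false) w c) l2 at_n1 at_n2 => [m []] //= _ at_n1 at_n2.
rewrite at_n1 at_n2 !crossing_event_incoming /= => G_eq.
rewrite (chord_index_arc (gauss_word_uniq pass_start_inj) G_eq) arc_under_balance //.
- by rewrite oppr_lt0 ltz_nat subn_gt0; case/andP: n_order.
- by rewrite c_ge.
by rewrite (take_nth (0, false) c_lt) braid_perm_rcons at_n1 l_eq step_incoming at_n2.
Qed.

End VirtualFirstBlock.

Theorem lemma4p5 (i j k : nat) :
  0 < j -> k < i ->
  one_component i (ijk_word i j k) ->
  forall c : nat, is_chord (ijk_word i j k) c ->
  chord_index i (ijk_word i j k) c != 0%R.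
Proof.
move=> _ k_lt w_cycle c c_chord; apply: ltr0_neq0.
have w_eq : ijk_word i j k = block i false ++ (flatten (nseq j.-1 (block i true)) ++ Bk k).
  by rewrite /ijk_word /VB1 catA.
rewrite w_eq in w_cycle c_chord *; apply: chord_index_lt0 => //; first lia.
- rewrite all_cat; apply/andP; split; apply/allP => l.
  + by case/flattenP => _ /nseqP [-> _] /mapP [m _ ->].
  + by case/mapP => m _ ->.
- rewrite all_cat; apply/andP; split; apply/allP => l.
  + by case/flattenP => _ /nseqP [-> _]; apply/allP/block_range.
  + by case/mapP => m; rewrite mem_rev mem_iota /inrange => m_range -> /=; lia.
Qed.
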